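(* Let $k\ge2$, and let $\mathcal P=\{p_1,\dots,p_{k^2}\}$ be a family of homogeneous real polynomials in the commuting variables $x_1,\dots,x_{2k^2}$ admitting an nc representation $p(X,Y)$ of degree $d>1$. Let $a\ne b$ and suppose $x_i$ is the $(a,a)$ entry of $X$, $x_j$ is the $(a,b)$ entry of $X$, and $x_\ell$ is the $(b,b)$ entry of $X$. If $\varphi(n,0)\ne0$ for some $n\ge2$, then exactly one polynomial of the family contains the monomials $\varphi(n,0)x_i^{n-1}x_j$ and $\varphi(n,0)x_jx_\ell^{n-1}$, and this polynomial is in position $(a,b)$ of the array $p(X,Y)$.
   Context: The family $\mathcal P$ admits an nc representation $p(X,Y)$ if there are $k\times k$ matrices $X,Y$ whose $2k^2$ entries are the variables $x_1,\dots,x_{2k^2}$, each used exactly once, and a noncommutative polynomial $p$ in two letters with real coefficients such that the matrix $p(X,Y)$ is a $k\times k$ array whose entries are $p_1,\dots,p_{k^2}$, each exactly once. $\varphi(i,j)$ is the sum of coefficients of all monomials of $p$ of degree $i$ in $X$ and $j$ in $Y$. *)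

From HB Require Import structures.
From mathcomp Require Import all_boot all_order all_algebra.
From mathcomp Require Import reals.
From mathcomp Require Import mpoly.

Set Implicit Arguments.
Unset Strict Implicit.
Unset Printing Implicit Defensive.

Import Order.TTheory GRing.Theory Num.Theory.
Local Open Scope ring_scope.

(* A noncommutative polynomial in two letters X (encoded [false]) and
   Y (encoded [true]) with coefficients in R: a finitely supported
   coefficient function on words. *)
Record ncpoly (R : nzRingType) := NCPoly {
  nccoef : seq bool -> R;
  ncsupp : seq (seq bool);
  ncsupp_uniq : uniq ncsupp;
  ncsuppP : forall w, nccoef w != 0 -> w \in ncsupp
}.

Definition ncdeg (R : nzRingType) (p : ncpoly R) : nat :=
  \max_(w <- ncsupp p | nccoef p w != 0%R) size w.

Definition ncphi (R : nzRingType) (p : ncpoly R) (i j : nat) : R :=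
  \sum_(w <- ncsupp p | (count negb w == i) && (count id w == j)) nccoef p w.

Definition word_eval (A : nzRingType) (k : nat) (X Y : 'M[A]_k) (w : seq bool)
  : 'M[A]_k :=
  foldr (fun b M => (if b then Y else X) *m M) 1%:M w.

Definition nceval (R : nzRingType) (A : lalgType R) (k : nat) (p : ncpoly R)
  (X Y : 'M[A]_k) : 'M[A]_k :=
  \matrix_(r, c) \sum_(w <- ncsupp p) nccoef p w *: word_eval X Y w r c.

Definition mhomog (R : nzRingType) (n : nat) (q : {mpoly R[n]}) : Prop :=
  exists dd : nat, forall m, m \in msupp q -> mdeg m = dd.

Definition genX (R : nzRingType) (k : nat)
  (e : ('I_k * 'I_k) + ('I_k * 'I_k) -> 'I_(2 * k ^ 2)) : 'M[{mpoly R[2 * k ^ 2]}]_k :=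
  \matrix_(r, c) 'X_(e (inl (r, c))).
Definition genY (R : nzRingType) (k : nat)
  (e : ('I_k * 'I_k) + ('I_k * 'I_k) -> 'I_(2 * k ^ 2)) : 'M[{mpoly R[2 * k ^ 2]}]_k :=
  \matrix_(r, c) 'X_(e (inr (r, c))).

From HB Require Import structures.
From mathcomp Require Import all_boot all_order all_algebra.
From mathcomp Require Import reals.
From mathcomp Require Import mpoly.

Import Order.TTheory GRing.Theory Num.Theory.
Local Open Scope ring_scope.

(* The (r, c) entry of a word in the generic matrices X, Y is the sum, over
   all paths r = q_0, q_1, ..., q_len = c, of the products of the variables
   read along the path (an X- or Y-variable according to the letter).  Since
   a != b, the monomials x_aa^(n-1) x_ab and x_ab x_bb^(n-1) each come from a
   single path: the word must be X^n and the path must run from a to b, with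
   its one off-diagonal step at the end, resp. at the start.  Hence their
   coefficient in entry (r, c) of p(X, Y) is phi(n, 0) if (r, c) = (a, b) and
   0 otherwise. *)

Lemma mcoeffXM (R : nzRingType) n (p : {mpoly R[n]}) (v : 'I_n) m :
  ('X_v * p)@_m = if (0 < m v)%N then p@_(m - U_(v))%MM else 0.
Proof.
rewrite -commr_mpolyX; case: ifP => [m_v_gt0|m_v_eq0].
  have le_U_m : (U_(v) <= m)%MM.
    by apply/mnm_lepP => x; rewrite mnm1E; case: eqP => [<-|].
  by rewrite -{1}(submK le_U_m) addmC mcoeffMX.
apply/eqP; rewrite mcoeff_eq0 (perm_mem (msuppMX _ _)).
by apply/mapP => -[m' _ mE]; move: m_v_eq0; rewrite mE mnmDE mnm1E eqxx.
Qed.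

Lemma mulmn1_eq0 n (v : 'I_n) s : ((U_(v) *+ s)%MM == 0%MM) = (s == 0)%N.
Proof.
apply/eqP/eqP => [/mnmP/(_ v)|->].
  by rewrite mulmnE mnm1E eqxx mul1n mnm0E.
by apply/mnmP => x; rewrite mulmnE muln0 ?mnmE.
Qed.

Lemma count_nseq_false (w : seq bool) n :
  (count negb w == n) && (count id w == 0)%N = (w == nseq n false).
Proof.
elim: w n => [|[] w IHw] [|n] //=; rewrite ?add0n ?add1n ?andbF //.
by rewrite eqSS IHw.
Qed.

Lemma mcoeff_nceval_nseq {R : nzRingType} {n k} {X Y : 'M[{mpoly R[n]}]_k}
    (p : ncpoly R) {s : nat} {m : 'X_{1..n}} {a b : 'I_k} :
  (forall w r c, (word_eval X Y w r c)@_m =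
                 ((w == nseq s false) && (r == a) && (c == b))%:R) ->
  forall r c, (nceval p X Y r c)@_m = ncphi p s 0 * ((r == a) && (c == b))%:R.
Proof.
move=> mcoeff_word r c; rewrite /nceval mxE raddf_sum /= /ncphi mulr_suml.
rewrite [RHS]big_mkcond /=.
apply: eq_bigr => w _; rewrite mcoeffZ mcoeff_word count_nseq_false.
by case: (w == nseq s false); rewrite ?mulr0.
Qed.

Section GenericWords.
Context {R : nzRingType} {k : nat}.
Context {e : ('I_k * 'I_k) + ('I_k * 'I_k) -> 'I_(2 * k ^ 2)}.
Hypothesis e_inj : injective e.

Local Notation gword w := (word_eval (genX R e) (genY R e) w).
Local Notation xX r c := (e (inl (r, c))).
Local Notation xY r c := (e (inr (r, c))).

Lemma mcoeff_gword_nil r c m :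
  (gword [::] r c)@_m = ((r == c) && (m == 0%MM))%:R.
Proof.
rewrite /word_eval /= mxE; case: (r == c) => /=; last exact: mcoeff0.
exact: mcoeff1.
Qed.

Lemma mcoeff_gwordX w r c m : (gword (false :: w) r c)@_m =
  \sum_q (if (0 < m (xX r q))%N then (gword w q c)@_(m - U_(xX r q))%MM else 0).
Proof.
rewrite /word_eval /= mxE raddf_sum /=; apply: eq_bigr => q _.
by rewrite /genX mxE mcoeffXM.
Qed.

Lemma mcoeff_gwordY w r c (m : 'X_{1..2 * k ^ 2}) :
  (forall q, m (xY r q) = 0%N) -> (gword (true :: w) r c)@_m = 0.
Proof.
move=> m_Y0; rewrite /word_eval /= mxE raddf_sum /= big1 // => q _.
by rewrite /genY mxE mcoeffXM m_Y0.
Qed.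

Lemma mnm1XY r c u v : U_(xX r c)%MM (xY u v) = 0%N.
Proof. by rewrite mnm1E (inj_eq e_inj). Qed.

Lemma mnm1XX r c u v : U_(xX r c)%MM (xX u v) = ((r == u) && (c == v)).
Proof. by rewrite mnm1E (inj_eq e_inj). Qed.

Lemma mcoeff_gword_loop u s w r c :
  (gword w r c)@_(U_(xX u u) *+ s)%MM =
  ((w == nseq s false) && (r == c) && ((s == 0)%N || (r == u)))%:R.
Proof.
elim: w s r => [|[] w IHw] s r.
- rewrite mcoeff_gword_nil mulmn1_eq0.
  by case: s => [|s] /=; rewrite ?andbT ?andbF.
- rewrite mcoeff_gwordY; first by case: s.
  by move=> q; rewrite mulmnE mnm1XY.
rewrite mcoeff_gwordX; case: s => [|s].
  by rewrite big1 // => q _; rewrite mulmnE muln0.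
case: (eqVneq r u) => [->|r_neq_u]; last first.
  rewrite big1 ?andbF // => q _.
  by rewrite mulmnE mnm1XX [u == r]eq_sym (negbTE r_neq_u).
rewrite (bigD1 u) //= big1 => [|q /negbTE q_neq_u]; last first.
  by rewrite mulmnE mnm1XX eqxx eq_sym q_neq_u.
rewrite mulmnE mnm1XX eqxx mul1n mulmS addmC addmK IHw addr0 /= eqseq_cons.
by rewrite eqxx !orbT !andbT.
Qed.

Context {a b : 'I_k}.
Hypothesis a_neq_b : a != b.
Let b_neq_a : (b == a) = false. Proof. by rewrite eq_sym (negbTE a_neq_b). Qed.

Lemma mcoeff_gword_loop_edge s w r c :
  (gword w r c)@_(U_(xX a a) *+ s + U_(xX a b))%MM =
  ((w == nseq s.+1 false) && (r == a) && (c == b))%:R.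
Proof.
elim: w s r => [|[] w IHw] s r.
- by rewrite mcoeff_gword_nil mnmD_eq0 mnm1_eq0 !andbF.
- by rewrite mcoeff_gwordY // => q; rewrite mnmDE mulmnE !mnm1XY.
rewrite mcoeff_gwordX; case: (eqVneq a r) => [<-|a_neq_r]; last first.
  rewrite big1 ?andbF // => q _.
  by rewrite mnmDE mulmnE !mnm1XX (negbTE a_neq_r).
rewrite (bigD1 a) // (bigD1 b) ?b_neq_a //= big1 => [|q /andP[q_neq_a q_neq_b]].
  rewrite addr0 !mnmDE !mulmnE !mnm1XX !eqxx b_neq_a addn1 /= mul1n addn0 addmK.
  rewrite mcoeff_gword_loop eqseq_cons eqxx b_neq_a orbF andbT /=.
  case: s => [|s] /=; first by rewrite add0r andbT [b == c]eq_sym.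
  by rewrite mulmS -addmA addmC addmK IHw eqxx /= andbF addr0 andbT.
rewrite mnmDE mulmnE !mnm1XX eqxx /= eq_sym (negbTE q_neq_a).
by rewrite eq_sym (negbTE q_neq_b).
Qed.

Lemma mcoeff_gword_edge_loop t w r c :
  (gword w r c)@_(U_(xX a b) + U_(xX b b) *+ t)%MM =
  ((w == nseq t.+1 false) && (r == a) && (c == b))%:R.
Proof.
elim: w t r => [|[] w IHw] t r.
- by rewrite mcoeff_gword_nil mnmD_eq0 mnm1_eq0 !andbF.
- by rewrite mcoeff_gwordY // => q; rewrite mnmDE mulmnE !mnm1XY.
rewrite mcoeff_gwordX; case: (eqVneq a r) => [<-|a_neq_r].
  rewrite (bigD1 b) //= big1 => [|q /negbTE q_neq_b]; last first.
    by rewrite mnmDE mulmnE !mnm1XX !eqxx /= eq_sym q_neq_b andbF.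
  rewrite mnmDE mulmnE !mnm1XX !eqxx /= addmC addmK mcoeff_gword_loop.
  by rewrite addr0 eqseq_cons !eqxx orbT !andbT [b == c]eq_sym.
case: (eqVneq b r) => [<-|b_neq_r]; last first.
  rewrite big1 ?andbF // => q _.
  by rewrite mnmDE mulmnE !mnm1XX (negbTE a_neq_r) (negbTE b_neq_r).
rewrite (bigD1 b) //= big1 => [|q /negbTE q_neq_b]; last first.
  by rewrite mnmDE mulmnE !mnm1XX eqxx [b == q]eq_sym q_neq_b andbF.
rewrite mnmDE mulmnE !mnm1XX !eqxx /= (negbTE a_neq_b) mul1n add0n addr0 andbF.
case: t => [|t] //=.
rewrite mulmS addmA [(_ + U_(_))%MM]addmC -addmA addmC addmK IHw.
by rewrite b_neq_a andbF.
Qed.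

End GenericWords.

Theorem lemma4p2 (R : realType) (k : nat) (hk : (2 <= k)%N)
  (P : 'I_(k ^ 2) -> {mpoly R[2 * k ^ 2]})
  (hP : forall m, mhomog (P m))
  (e : ('I_k * 'I_k) + ('I_k * 'I_k) -> 'I_(2 * k ^ 2)) (he : bijective e)
  (p : ncpoly R) (d : nat) (hd : ncdeg p = d) (hd1 : (1 < d)%N)
  (sigma : 'I_k * 'I_k -> 'I_(k ^ 2)) (hsigma : bijective sigma)
  (hrep : forall r c : 'I_k,
      nceval p (genX R e) (genY R e) r c = P (sigma (r, c)))
  (a b : 'I_k) (hab : a != b) (i j l : 'I_(2 * k ^ 2))
  (hi : e (inl (a, a)) = i) (hj : e (inl (a, b)) = j) (hl : e (inl (b, b)) = l)
  (n : nat) (hn : (2 <= n)%N) (hphi : ncphi p n 0 != 0) :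
  forall m : 'I_(k ^ 2),
    ((P m)@_(U_(i) *+ (n - 1) + U_(j))%MM = ncphi p n 0 /\
     (P m)@_(U_(j) + U_(l) *+ (n - 1))%MM = ncphi p n 0)
    <-> m = sigma (a, b).
Proof.
move=> m; subst i j l.
have e_inj := bij_inj he; have sigma_inj := bij_inj hsigma.
have [[r c] ->] : exists rc, m = sigma rc.
  by case: hsigma => sigma' _ sigmaK; exists (sigma' m); rewrite sigmaK.
case: n hn hphi => // s _ hphi.
rewrite subn1 /= -hrep.
rewrite !(mcoeff_nceval_nseq p (mcoeff_gword_loop_edge e_inj hab s)).
rewrite !(mcoeff_nceval_nseq p (mcoeff_gword_edge_loop e_inj hab s)).
split=> [[ab_coef _]|/sigma_inj [-> ->]]; last by rewrite !eqxx mulr1.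
suff /andP[/eqP -> /eqP ->] : (r == a) && (c == b) by [].
apply: contraTT hphi => /negbTE rc_neq_ab.
by rewrite negbK -ab_coef rc_neq_ab mulr0.
Qed.
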